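(* Let $G=(V,E)$ be a claw-free graph and $I$ a maximum cardinality independent set of $G$. Let $\mathtt{T2}=\bigcup_{a\in I}\mathtt{T2}^a$ and let $G_{\mathtt{T2}}$ be the graph with vertex set $\mathtt{T2}$ whose edges are those edges of $G[\mathtt{T2}]$ whose endpoints lie in different $1$-packs. Let $v,w\in\mathtt{T2}$ with $v\in V_a$, $w\in V_b$, $a\ne b$. Then $vw\in E$ if and only if $v$ and $w$ lie in the same connected component of $G_{\mathtt{T2}}$.
   Context: Graphs are finite, simple, undirected; claw-free means no induced $K_{1,3}$. For $a\in I$, the $1$-pack $V_a$ is $\{v\in V\setminus I : N(v)\cap I=\{a\}\}$. For $a\in I$, $\mathtt{T2}^a$ is the set of vertices $v\in V_a$ that have neighbours in at least two distinct $1$-packs other than $V_a$. *)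

From mathcomp Require Import all_boot.
Set Implicit Arguments. Unset Strict Implicit. Unset Printing Implicit Defensive.

Section Graphs.
Variables (T : finType) (e : rel T).

Definition simple_graph : Prop := symmetric e /\ irreflexive e.

Definition claw_free : Prop :=
  forall c x y z : T, e c x -> e c y -> e c z ->
    x != y -> x != z -> y != z ->
    e x y || e x z || e y z.

Definition independent (I : {set T}) : bool :=
  [forall x in I, forall y in I, ~~ e x y].

Definition maximum_independent (I : {set T}) : Prop :=
  independent I /\ forall J : {set T}, independent J -> #|J| <= #|I|.

Definition pack (I : {set T}) (a : T) : {set T} :=
  [set v | (v \notin I) && ([set u in I | e v u] == [set a])].

Definition T2a (I : {set T}) (a : T) : {set T} :=
  [set v in pack I a | [exists b1 in I, exists b2 in I,
     [&& b1 != b2, b1 != a, b2 != a,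
         [exists u in pack I b1, e v u] &
         [exists u in pack I b2, e v u]]]].

Definition T2 (I : {set T}) : {set T} := \bigcup_(a in I) T2a I a.

Definition GT2 (I : {set T}) : rel T := fun x y =>
  [&& x \in T2 I, y \in T2 I, e x y &
      [exists a in I, exists b in I,
         [&& a != b, x \in pack I a & y \in pack I b]]].

End Graphs.

(* A component of G_T2 is a clique of G.  Grow a G_T2-path one vertex at a
   time: if x joins the clique K along the G_T2-edge xy, every other z in K
   has a G_T2-neighbour z' in K, and a short chain of claw arguments centred
   at vertices of 1-packs (whose only neighbour in I is their own centre)
   forces zx.  The only delicate case is z in the pack of y and z' in the
   pack of x, where the T2 property of z provides a vertex u of a third pack
   adjacent to all four vertices.  Hence two T2 vertices of different packs
   joined by a G_T2-path are adjacent. *)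
From mathcomp Require Import all_boot.
Set Implicit Arguments. Unset Strict Implicit. Unset Printing Implicit Defensive.

Lemma path_sym_neighbour (T : eqType) (r : rel T) x y p :
  symmetric r -> path r x (y :: p) ->
  {in x :: y :: p, forall z, exists2 z', z' \in x :: y :: p & r z z'}.
Proof.
move=> r_sym; elim: p x y => [|y' p IH] x y /=.
  rewrite andbT => rxy z; rewrite !inE => /orP [] /eqP ->.
  - by exists y; rewrite ?inE ?eqxx ?orbT.
  - by exists x; rewrite ?inE ?eqxx // r_sym.
move=> /andP [rxy pth] z; rewrite in_cons => /orP [/eqP ->|zin].
  by exists y; rewrite ?inE ?eqxx ?orbT.
have [z' z'in rzz'] := IH y y' pth z zin.
by exists z' => //; rewrite in_cons z'in orbT.
Qed.

Section ClawFreePacks.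
Variables (T : finType) (e : rel T) (I : {set T}).
Hypothesis e_sym : symmetric e.
Hypothesis e_claw_free : claw_free e.

Lemma pack_edgeE z c c' :
  z \in pack e I c -> c' \in I -> e z c' = (c' == c).
Proof.
rewrite inE => /andP [_ /eqP Nz] c'I.
have : (c' \in [set u in I | e z u]) = (c' \in [set c]) by rewrite Nz.
by rewrite !inE c'I.
Qed.

Lemma pack_inv z c : z \in pack e I c -> [/\ z \notin I, c \in I & e z c].
Proof.
rewrite inE => /andP [zI /eqP Nz]; rewrite zI.
have : c \in [set u in I | e z u] by rewrite Nz set11.
by rewrite inE => /andP [-> ->].
Qed.

Lemma pack_inj z c d : z \in pack e I c -> z \in pack e I d -> c = d.
Proof.
move=> zc zd; have [_ dI ezd] := pack_inv zd.
by move: ezd; rewrite (pack_edgeE zc dI) => /eqP.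
Qed.

Lemma pack_neq p q c d :
  p \in pack e I c -> q \in pack e I d -> c != d -> p != q.
Proof. by move=> pc qd; apply: contraNneq => pq; apply/eqP/(pack_inj pc); rewrite pq. Qed.

Lemma pack_claw x p q a c d :
  x \in pack e I a -> p \in pack e I c -> q \in pack e I d ->
  c != a -> d != a -> p != q -> e x p -> e x q -> e p q.
Proof.
move=> xa pc qd ca da pq exp exq.
have [_ aI exa] := pack_inv xa; have [pI _ _] := pack_inv pc; have [qI _ _] := pack_inv qd.
have ap : a != p by apply: contraNneq pI => <-.
have aq : a != q by apply: contraNneq qI => <-.
have := e_claw_free exa exp exq ap aq pq.
by rewrite !(e_sym a) (pack_edgeE pc aI) (pack_edgeE qd aI) ![a == _]eq_sym (negbTE ca) (negbTE da).
Qed.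

Lemma T2_pack_neighbour z a b :
  z \in T2 e I -> z \in pack e I a ->
  exists c u, [/\ u \in pack e I c, e z u, c != a & c != b].
Proof.
move=> /bigcupP [a' _]; rewrite inE => /andP [za'] /existsP [b1] /andP [_]
  /existsP [b2] /andP [_] /and5P [b12 b1a' b2a' /existsP [u1 /andP [u1b1 ezu1]]
  /existsP [u2 /andP [u2b2 ezu2]]] za.
rewrite (pack_inj za' za) in b1a' b2a'.
case: (eqVneq b1 b) => [b1b|b1b]; last by exists b1, u1.
by exists b2, u2; split; rewrite // -b1b eq_sym.
Qed.

Lemma GT2_inv x y :
  GT2 e I x y -> [/\ x \in T2 e I, y \in T2 e I, e x y &
    exists a b, [/\ a != b, x \in pack e I a & y \in pack e I b]].
Proof.
case/and4P=> xT yT exy /existsP [a] /andP [_] /existsP [b] /andP [_] /and3P [ab xa yb].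
by split => //; exists a, b.
Qed.

Lemma GT2_sym : symmetric (GT2 e I).
Proof.
suff GT2_swap x y : GT2 e I x y -> GT2 e I y x by move=> x y; apply/idP/idP; apply: GT2_swap.
move=> /GT2_inv [xT yT exy [a [b [ab xa yb]]]].
have [_ aI _] := pack_inv xa; have [_ bI _] := pack_inv yb.
rewrite /GT2 xT yT e_sym exy /=; apply/existsP; exists b; rewrite bI /=.
by apply/existsP; exists a; rewrite aI eq_sym ab xa yb.
Qed.

Lemma GT2_clique_step x y z z' :
  GT2 e I x y -> GT2 e I z z' -> z != y -> e x z -> (x = z' \/ e x z') ->
  e z y.
Proof.
move=> /GT2_inv [_ _ exy [a [b [ab xa yb]]]] /GT2_inv [zT _ ezz' [c [d [cd zc z'd]]]].
move=> zy exz exz'_or_eq.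
have ba : b != a by rewrite eq_sym.
have [ca|ca] := eqVneq c a; last exact: (pack_claw xa zc yb ca ba zy exz exy).
subst c.
have exz' : e x z'.
  case: exz'_or_eq => // xz'; move: cd; rewrite -xz' in z'd.
  by rewrite (pack_inj z'd xa) eqxx.
have [<-|z'y] := eqVneq z' y; first exact: ezz'.
have da : d != a by rewrite eq_sym.
have ez'y : e z' y := pack_claw xa z'd yb da ba z'y exz' exy.
have [db|db] := eqVneq d b; last first.
  apply: (pack_claw z'd zc yb cd _ zy _ ez'y); first by rewrite eq_sym.
  by rewrite e_sym.
subst d.
have [c [u [uc ezu ca cb]]] := T2_pack_neighbour b zT zc.
have bc : b != c by rewrite eq_sym.
have ac : a != c by rewrite eq_sym.
have ez'u : e z' u := pack_claw zc z'd uc ba ca (pack_neq z'd uc bc) ezz' ezu.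
have exu : e x u.
  by apply: (pack_claw z'd xa uc ab cb (pack_neq xa uc ac) _ ez'u); rewrite e_sym.
have eyu : e y u := pack_claw xa yb uc ba ca (pack_neq yb uc bc) exy exu.
by apply: (pack_claw uc zc yb ac bc zy); rewrite e_sym.
Qed.

Lemma GT2_path_clique x p :
  path (GT2 e I) x p -> {in x :: p &, forall z1 z2, z1 = z2 \/ e z1 z2}.
Proof.
elim: p x => [|y p IH] x /=.
  by move=> _ z1 z2; rewrite !inE => /eqP -> /eqP ->; left.
move=> /andP [gxy pth]; have clq := IH y pth.
have [_ _ exy _] := GT2_inv gxy.
have x_clq z : z \in y :: p -> z = x \/ e x z.
  move=> zin; have [->|zx] := eqVneq z x; [by left | right].
  have [->|zy] := eqVneq z y; first exact: exy.
  have [z' z'in gzz'] : exists2 z', z' \in y :: p & GT2 e I z z'.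
    case: p pth zin {IH clq} => [|y' p] pth zin.
      by move: zin zy; rewrite inE => ->.
    exact: path_sym_neighbour GT2_sym pth z zin.
  have [yz|eyz] : y = z \/ e y z := clq y z (mem_head _ _) zin.
    by rewrite yz eqxx in zy.
  rewrite e_sym; apply: (GT2_clique_step _ gzz' zx eyz (clq y z' (mem_head _ _) z'in)).
  by rewrite GT2_sym.
move=> z1 z2; rewrite !(in_cons x) => /orP [/eqP ->|z1in] /orP [/eqP ->|z2in].
- by left.
- by case: (x_clq z2 z2in) => [->|]; [left | right].
- by case: (x_clq z1 z1in) => [->|]; [left | right; rewrite e_sym].
- exact: clq.
Qed.

End ClawFreePacks.

Theorem lemma11 (T : finType) (e : rel T) (I : {set T}) (v w a b : T) :
  simple_graph e -> claw_free e -> maximum_independent e I ->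
  a \in I -> b \in I -> a != b ->
  v \in T2 e I -> w \in T2 e I ->
  v \in pack e I a -> w \in pack e I b ->
  e v w = connect (GT2 e I) v w.
Proof.
move=> [e_sym _] cf _ aI bI ab vT wT va wb; apply/idP/idP => [evw|].
  apply: connect1; rewrite /GT2 vT wT evw /=.
  by apply/existsP; exists a; rewrite aI /=; apply/existsP; exists b; rewrite bI ab va wb.
move=> /connectP [p pth wE].
have wp : w \in v :: p by rewrite wE mem_last.
have [vw|//] := GT2_path_clique e_sym cf pth (mem_head _ _) wp.
by move: (pack_neq va wb ab); rewrite vw eqxx.
Qed.
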